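(* Let $R$ be a commutative ring with $2=0$, and let $(A,\mathcal{I},\Omega)$ be an axial decomposition algebra over $R$ (with $A$ commutative) with respect to a fusion law $(X,* )$ equipped with a $\mathbb{Z}/2\mathbb{Z}$-grading $\xi$, such that all axes $a_i$ ($i\in\mathcal{I}$) are idempotents. Then every axis is contained in the zero-core $\bigcap_{i\in\mathcal{I}} A^i_{\xi^{-1}(0)}$. In particular, if $A$ is generated (as an algebra) by its axes, then all the $\mathbb{Z}/2\mathbb{Z}$-decompositions are trivial, i.e. $A^i_{\xi^{-1}(1)}=0$ for all $i\in\mathcal{I}$.
   Context: A fusion law is a pair $(X,* )$ with $*\colon X\times X\to 2^X$; $e\in X$ is a unit if $e*x\subseteq\{x\}$ and $x*e\subseteq\{x\}$ for all $x$. A $\Phi$-decomposition of an $R$-algebra $A$ is a direct sum $A=\bigoplus_{x\in X}A_x$ of $R$-modules with $A_xA_y\subseteq A_{x*y}$, where $A_Y=\bigoplus_{y\in Y}A_y$ (so $A_\emptyset=0$). A $\Phi$-decomposition algebra $(A,\mathcal{I},\Omega)$ is an algebra $A$ with a family $\Omega=((A^i_x)_{x\in X})_{i\in\mathcal{I}}$ of $\Phi$-decompositions. Given a distinguished unit $e\in X$ and parameters $\lambda_x\in R$, it is axial if for each $i$ there is a nonzero $a_i\in A^i_e$ (an axis) with $a_ib=\lambda_xb$ for all $x\in X$ and $b\in A^i_x$. A $\mathbb{Z}/2\mathbb{Z}$-grading of $(X,* )$ is a map $\xi\colon X\to\mathbb{Z}/2\mathbb{Z}$ with $\xi(x*y)\subseteq\{\xi(x)+\xi(y)\}$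 for all $x,y$. All algebras are commutative, not necessarily associative or unital. *)

From HB Require Import structures.
From mathcomp Require Import all_boot all_order all_algebra.
Set Implicit Arguments. Unset Strict Implicit. Unset Printing Implicit Defensive.
Import GRing.Theory.
Local Open Scope ring_scope.

(* A fusion law (X, * ) is encoded by [star : X -> X -> X -> Prop],
   where [star x y z] means z \in x * y. *)

Definition is_unit (X : Type) (star : X -> X -> X -> Prop) (e : X) : Prop :=
  forall x z, (star e x z -> z = x) /\ (star x e z -> z = x).

Definition is_Z2_grading (X : Type) (star : X -> X -> X -> Prop)
  (xi : X -> 'Z_2) : Prop :=
  forall x y z, star x y z -> xi z = xi x + xi y.

Definition is_comm_algebra (R : comPzRingType) (A : lmodType R)
  (mul : A -> A -> A) : Prop :=
  (forall a b, mul a b = mul b a) /\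
  (forall a b c, mul (a + b) c = mul a c + mul b c) /\
  (forall (r : R) a b, mul (r *: a) b = r *: mul a b).

Definition is_submodule (R : comPzRingType) (A : lmodType R) (P : A -> Prop)
  : Prop :=
  P 0 /\ (forall a b, P a -> P b -> P (a + b)) /\
  (forall (r : R) a, P a -> P (r *: a)).

(* Membership in A_Y = (sum over y in Y of A_y): a finite sum of elements
   a_y \in A_y over distinct y \in Y.  For Y empty this is {0}. *)
Definition in_sum (R : comPzRingType) (A : lmodType R) (X : eqType)
  (V : X -> A -> Prop) (Y : X -> Prop) (a : A) : Prop :=
  exists (s : seq X) (f : X -> A),
    [/\ uniq s, (forall x, x \in s -> Y x /\ V x (f x)) &
        a = \sum_(x <- s) f x].

Definition is_decomposition (R : comPzRingType) (A : lmodType R)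
  (mul : A -> A -> A) (X : eqType) (star : X -> X -> X -> Prop)
  (V : X -> A -> Prop) : Prop :=
  [/\ (forall x, is_submodule (V x)),
      (forall a, in_sum V (fun _ => True) a),
      (forall (s : seq X) (f : X -> A), uniq s ->
          (forall x, x \in s -> V x (f x)) ->
          \sum_(x <- s) f x = 0 -> forall x, x \in s -> f x = 0) &
      (forall x y a b, V x a -> V y b -> in_sum V (star x y) (mul a b))].

Definition is_axial (R : comPzRingType) (A : lmodType R)
  (mul : A -> A -> A) (X : eqType) (I : Type) (V : I -> X -> A -> Prop)
  (e : X) (lam : X -> R) (a : I -> A) : Prop :=
  forall i, [/\ a i != 0, V i e (a i) &
     forall x b, V i x b -> mul (a i) b = lam x *: b].

Definition generated_by (R : comPzRingType) (A : lmodType R)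
  (mul : A -> A -> A) (G : A -> Prop) : Prop :=
  forall S : A -> Prop, is_submodule S ->
    (forall a b, S a -> S b -> S (mul a b)) ->
    (forall a, G a -> S a) -> forall a, S a.

From mathcomp Require Import all_boot all_order all_algebra.
Local Open Scope ring_scope.
Import GRing.Theory.
Set Implicit Arguments. Unset Strict Implicit.

(* Split each decomposition into its even part A_+ (indices with xi = 0) and
   odd part A_-.  The grading gives A_+A_+, A_-A_- <= A_+, so for an axis
   a = u + o with u even and o odd, a = a^2 = u^2 + o^2 + 2uo = u^2 + o^2 lies
   in A_+ because 2 = 0.  If the axes generate A, the subalgebra A_+ is all
   of A, and A_+ and A_- meet trivially since the sum is direct. *)

Section Spans.

Variables (R : comPzRingType) (A : lmodType R) (X : eqType).
Variable V : X -> A -> Prop.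

(* Like [in_sum], but indices may repeat; this makes sums and products of
   spans easy to form, and [in_span_sum] shows nothing is lost. *)
Definition in_span (Y : X -> Prop) (a : A) : Prop :=
  exists s : seq (X * A),
    (forall p, p \in s -> Y p.1 /\ V p.1 p.2) /\ a = \sum_(p <- s) p.2.

Lemma in_sum_span (Y : X -> Prop) (a : A) : in_sum V Y a -> in_span Y a.
Proof.
move=> [s [f [_ sY ->]]]; exists [seq (x, f x) | x <- s]; rewrite big_map.
by split=> // _ /mapP[x xs ->]; exact: sY.
Qed.

Lemma in_span_mono (Y Z : X -> Prop) (a : A) :
  (forall x, Y x -> Z x) -> in_span Y a -> in_span Z a.
Proof. by move=> YZ [s [sY ->]]; exists s; split=> // p /sY[/YZ]. Qed.

Lemma submodule_sum (P : A -> Prop) (T : Type) (r : seq T) (Q : pred T)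
    (F : T -> A) :
  is_submodule P -> (forall i, Q i -> P (F i)) -> P (\sum_(i <- r | Q i) F i).
Proof. by move=> [P0 [PD _]] PF; apply: big_ind. Qed.

Hypothesis V_submodule : forall x, is_submodule (V x).

Lemma in_span_submodule (Y : X -> Prop) : is_submodule (in_span Y).
Proof.
split; first by exists [::]; rewrite big_nil.
split=> [a b [s [sY ->]] [t [tY ->]] | r a [s [sY ->]]].
  exists (s ++ t); rewrite big_cat; split=> // p.
  by rewrite mem_cat => /orP[/sY | /tY].
exists [seq (p.1, r *: p.2) | p <- s]; rewrite big_map scaler_sumr.
split=> // _ /mapP[p ps ->]; have [Yp Vp] := sY p ps.
by split=> //; have [_ [_ VZ]] := V_submodule p.1; exact: VZ.
Qed.

Lemma in_span_sum (Y : X -> Prop) (a : A) : in_span Y a -> in_sum V Y a.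
Proof.
move=> [s [sY ->]].
exists (undup (map fst s)), (fun x => \sum_(p <- s | x == p.1) p.2).
split; first exact: undup_uniq.
  move=> x; rewrite mem_undup => /mapP[p ps ->]; split; first by case: (sY p ps).
  rewrite big_seq_cond; apply: submodule_sum => // q /andP[qs /eqP ->].
  by case: (sY q qs).
rewrite (exchange_big_dep predT) //=; apply: eq_big_seq => p ps.
rewrite -big_filter filter_pred1_uniq ?undup_uniq ?mem_undup ?map_f //.
by rewrite big_seq1.
Qed.

Hypothesis V_direct : forall (s : seq X) (f : X -> A), uniq s ->
  (forall x, x \in s -> V x (f x)) ->
  \sum_(x <- s) f x = 0 -> forall x, x \in s -> f x = 0.

Lemma in_sum_disjoint_eq0 (Y Z : X -> Prop) (b : A) :
  (forall x, Y x -> Z x -> False) -> in_sum V Y b -> in_sum V Z b -> b = 0.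
Proof.
move=> YZ [s [f [us sY ->]]] [t [g [ut tZ bE]]].
have s'_t x : x \in s -> x \notin t.
  by move=> /sY[Yx _]; apply/negP=> /tZ[Zx _]; exact: YZ Yx Zx.
pose h x := if x \in s then f x else - g x.
have hs x : x \in s -> h x = f x by rewrite /h => ->.
have ht x : x \in t -> h x = - g x.
  by move=> xt; rewrite /h; case: ifP => // /s'_t; rewrite xt.
have h0 : forall x, x \in s ++ t -> h x = 0.
  apply: V_direct.
  - rewrite cat_uniq us ut andbT /=; apply/hasPn=> x xt.
    by apply/negP=> /s'_t; rewrite xt.
  - move=> x; rewrite mem_cat => /orP[xs | xt].
      by rewrite hs //; case: (sY x xs).
    rewrite ht //; have [_ Vx] := tZ x xt; have [_ [_ VZ]] := V_submodule x.
    by rewrite -scaleN1r; exact: VZ.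
  - rewrite big_cat (eq_big_seq f hs) (eq_big_seq (fun x => - g x) ht).
    rewrite sumrN bE; exact: subrr.
by rewrite big_seq big1 // => x xs; rewrite -hs ?h0 // mem_cat xs.
Qed.

End Spans.

Section CommAlgebra.

Variables (R : comPzRingType) (A : lmodType R) (mul : A -> A -> A).
Hypothesis mul_comm_alg : is_comm_algebra mul.

Lemma mul_suml (T : Type) (r : seq T) (F : T -> A) (b : A) :
  mul (\sum_(i <- r) F i) b = \sum_(i <- r) mul (F i) b.
Proof.
have [_ [mulDl mulZl]] := mul_comm_alg.
elim: r => [|x r IH]; last by rewrite !big_cons mulDl IH.
by rewrite !big_nil -{1}(scale0r (0 : A)) mulZl scale0r.
Qed.

Lemma mul_sumr (T : Type) (r : seq T) (F : T -> A) (b : A) :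
  mul b (\sum_(i <- r) F i) = \sum_(i <- r) mul b (F i).
Proof.
have [mulC _] := mul_comm_alg.
by rewrite mulC mul_suml; apply: eq_bigr => i _; rewrite mulC.
Qed.

Lemma mul_sqrD_char2 (u o : A) :
  (2%:R : R) = 0 -> mul (u + o) (u + o) = mul u u + mul o o.
Proof.
move=> char2; have [mulC [mulDl _]] := mul_comm_alg.
have mulDr b c d : mul b (c + d) = mul b c + mul b d.
  by rewrite mulC mulDl !(mulC _ b).
have uo2 : mul u o + mul u o = 0.
  by rewrite -mulr2n -scaler_nat char2 scale0r.
by rewrite mulDl !mulDr (mulC o u) addrA -(addrA (mul u u)) uo2 addr0.
Qed.

End CommAlgebra.

Lemma Z2_neq0 (x : 'Z_2) : x != 0 -> x = 1.
Proof. by case: x => [[|[|n]] //= lt_n2] _; apply: val_inj. Qed.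

Section Z2Grading.

Variables (R : comPzRingType) (A : lmodType R) (mul : A -> A -> A).
Variables (X : eqType) (star : X -> X -> X -> Prop) (xi : X -> 'Z_2).
Variable V : X -> A -> Prop.
Hypothesis mul_comm_alg : is_comm_algebra mul.
Hypothesis xi_grading : is_Z2_grading star xi.
Hypothesis V_decomposition : is_decomposition mul star V.

Definition graded (p : 'Z_2) : A -> Prop := in_span V (fun x => xi x = p).

Lemma decomposition_submodule x : is_submodule (V x).
Proof. by case: V_decomposition. Qed.

Lemma graded_submodule p : is_submodule (graded p).
Proof. exact/in_span_submodule/decomposition_submodule. Qed.

Lemma graded_mul p q u w :
  graded p u -> graded q w -> graded (p + q) (mul u w).
Proof.
have [_ _ _ V_mul] := V_decomposition.
move=> [s [sp ->]] [t [tq ->]].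
rewrite mul_suml // big_seq; apply: submodule_sum (graded_submodule _) _.
move=> x xs; rewrite mul_sumr // big_seq; apply: submodule_sum (graded_submodule _) _.
move=> y yt; have [xp Vx] := sp x xs; have [yq Vy] := tq y yt.
apply: in_span_mono (in_sum_span (V_mul _ _ _ _ Vx Vy)) => z /xi_grading ->.
by rewrite xp yq.
Qed.

Lemma graded_split (u : A) :
  exists v w, [/\ graded 0 v, graded 1 w & u = v + w].
Proof.
have [_ V_full _ _] := V_decomposition.
have [s [sV ->]] := in_sum_span (V_full u).
exists (\sum_(p <- s | xi p.1 == 0) p.2), (\sum_(p <- s | xi p.1 != 0) p.2).
split; last by rewrite (bigID (fun p => xi p.1 == 0)).
- exists [seq p <- s | xi p.1 == 0]; rewrite big_filter; split=> // p.
  by rewrite mem_filter => /andP[/eqP -> /sV[]].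
- exists [seq p <- s | xi p.1 != 0]; rewrite big_filter; split=> // p.
  by rewrite mem_filter => /andP[/Z2_neq0 -> /sV[]].
Qed.

Lemma graded_eq0 b : graded 0 b -> graded 1 b -> b = 0.
Proof.
have [V_sub _ V_direct _] := V_decomposition.
move=> /(in_span_sum V_sub) b0 /(in_span_sum V_sub) b1.
by apply: (in_sum_disjoint_eq0 V_sub V_direct _ b0 b1) => x ->.
Qed.

Lemma graded0_mul u w : graded 0 u -> graded 0 w -> graded 0 (mul u w).
Proof. by move=> u0 w0; have := graded_mul u0 w0; rewrite addr0. Qed.

Lemma idempotent_graded0 (c : A) :
  (2%:R : R) = 0 -> mul c c = c -> graded 0 c.
Proof.
move=> char2 <-; have [u [o [u0 o1 ->]]] := graded_split c.
rewrite mul_sqrD_char2 //; have [_ [graded0D _]] := graded_submodule 0.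
apply: graded0D; first exact: graded0_mul.
have -> : 0 = 1 + 1 :> 'Z_2 by apply: val_inj.
exact: graded_mul.
Qed.

Lemma generated_graded0 (G : A -> Prop) :
  generated_by mul G -> (forall g, G g -> graded 0 g) -> forall b, graded 0 b.
Proof.
move=> genG G0; apply: genG G0; [exact: graded_submodule | exact: graded0_mul].
Qed.

End Z2Grading.

Theorem proposition4p1 (R : comPzRingType) (A : lmodType R)
  (mul : A -> A -> A) (X : eqType) (star : X -> X -> X -> Prop)
  (e : X) (lam : X -> R) (xi : X -> 'Z_2)
  (I : Type) (V : I -> X -> A -> Prop) (a : I -> A) :
  (2%:R : R) = 0 ->
  is_comm_algebra mul ->
  is_unit star e ->
  is_Z2_grading star xi ->
  (forall i, is_decomposition mul star (V i)) ->
  is_axial mul V e lam a ->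
  (forall i, mul (a i) (a i) = a i) ->
  (forall j i, in_sum (V i) (fun x => xi x = 0) (a j)) /\
  (generated_by mul (fun b => exists i, b = a i) ->
     forall i b, in_sum (V i) (fun x => xi x = 1) b -> b = 0).
Proof.
move=> char2 mul_alg _ xi_grading V_dec _ a_idem.
have a_even j i : graded xi (V i) 0 (a j).
  exact: (idempotent_graded0 mul_alg xi_grading (V_dec i) char2 (a_idem j)).
split=> [j i | genA i b b_odd].
  exact/(in_span_sum (decomposition_submodule (V_dec i)))/a_even.
have b_even : graded xi (V i) 0 b.
  by apply: (generated_graded0 mul_alg xi_grading (V_dec i) genA) => _ [j ->].
by apply: (graded_eq0 (V_dec i) b_even); apply: in_sum_span.
Qed.
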